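(* Let $(A,I)$ be a prism and $m,n\ge0$. The map $\delta_\bullet\colon A\to W(A)$, followed by truncation and reduction $W(A)\to W_m(A)\to W_m(A/\phi^m(I_n)A)$, factors through $A/I_{m+n}$, giving a map $\delta_\bullet\colon A/I_{m+n}\to W_m(A/\phi^m(I_n)A)$.
   Context: A $\delta$-ring $A$ has Frobenius lift $\phi(x)=x^p+p\delta(x)$. The map $\delta_\bullet\colon A\to W(A)$ encoding the $\delta$-structure is the ring map with Witt coordinates $(x,\delta(x),\delta_2(x),\dots)$ and ghost coordinates $(x,\phi(x),\phi^2(x),\dots)$, i.e.\ $\phi^n(x)=\sum_{k=0}^np^k\delta_k(x)^{p^{n-k}}$. A prism $(A,I)$: $\delta$-ring, $I$ defining a Cartier divisor, $A$ derived $(p,I)$-complete, $p\in I+\phi(I)A$. $I_n=I\phi(I)\cdots\phi^n(I)A$. $W_m$ denotes $p$-typical Witt vectors with $m+1$ coordinates. *)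

From mathcomp Require Import all_boot all_algebra.
Set Implicit Arguments. Unset Strict Implicit. Unset Printing Implicit Defensive.
Import GRing.Theory.
Local Open Scope ring_scope.

Section Prism.
Variables (p : nat) (A : comPzRingType) (delta : A -> A).

(* delta-ring structure (Bhatt-Scholze): delta(x+y) = delta x + delta y
   + (x^p + y^p - (x+y)^p)/p, the last term written with the integers C(p,i)/p. *)
Definition is_delta_structure : Prop :=
  [/\ delta 0 = 0, delta 1 = 0,
      forall x y, delta (x * y) =
        x ^+ p * delta y + y ^+ p * delta x + p%:R * delta x * delta y &
      forall x y, delta (x + y) = delta x + delta y
        - \sum_(1 <= i < p) ('C(p, i) %/ p)%:R * x ^+ i * y ^+ (p - i)].

Definition frob (x : A) : A := x ^+ p + p%:R * delta x.
Definition frobn (k : nat) : A -> A := iter k frob.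

(* Witt coordinates delta_k of delta_bullet : A -> W(A).  They are the unique
   universal integral expressions with phi^n(x) = sum_k p^k delta_k(x)^(p^(n-k)).
   Explicitly, p^(n+1) delta_(n+1) = sum_(k<=n) p^k ((delta_k^p + p delta(delta_k))^(p^(n-k))
   - delta_k^(p^(n+1-k))), which after binomial expansion has integer coefficients
   wcoef j i = C(p^j, i) p^i / p^(j+1)  (exact division). *)
Definition wcoef (j i : nat) : nat := ('C(p ^ j, i) * p ^ i %/ p ^ j.+1)%N.

Fixpoint delta_seq (n : nat) (x : A) : seq A :=
  match n with
  | 0 => [:: x]
  | n'.+1 =>
      let s := delta_seq n' x in
      rcons s (\sum_(k < n'.+1) \sum_(1 <= i < (p ^ (n' - k)).+1)
                 (wcoef (n' - k) i)%:R * (nth 0 s k) ^+ (p * (p ^ (n' - k) - i))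
                   * (delta (nth 0 s k)) ^+ i)
  end.

Definition delta_k (k : nat) (x : A) : A := nth 0 (delta_seq k x) k.

Definition is_ideal (J : A -> Prop) : Prop :=
  [/\ J 0, forall x y, J x -> J y -> J (x + y) & forall a x, J x -> J (a * x)].

Definition gen_ideal (S : A -> Prop) : A -> Prop :=
  fun x => forall J, is_ideal J -> (forall s, S s -> J s) -> J x.

Definition ideal_mul (J K : A -> Prop) : A -> Prop :=
  gen_ideal (fun z => exists j k, [/\ J j, K k & z = j * k]).

Definition ideal_add (J K : A -> Prop) : A -> Prop :=
  fun z => exists j k, [/\ J j, K k & z = j + k].

Definition frobn_ext (k : nat) (J : A -> Prop) : A -> Prop :=
  gen_ideal (fun z => exists x, J x /\ z = frobn k x).

Fixpoint I_n (I : A -> Prop) (n : nat) : A -> Prop :=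
  match n with
  | 0 => I
  | n'.+1 => ideal_mul (I_n I n') (frobn_ext n'.+1 I)
  end.

(* I defines an (effective) Cartier divisor: there is a finite cover of Spec A by
   D(f_i) such that I A_(f_i) = g_i A_(f_i) with g_i a nonzerodivisor in A_(f_i),
   written without localizations. *)
Definition cartier_divisor (I : A -> Prop) : Prop :=
  is_ideal I /\
  exists (r : nat) (f g a : 'I_r -> A),
    \sum_(i < r) a i * f i = 1 /\
    forall i, [/\ I (g i),
      (forall x, I x -> exists (N : nat) (y : A), f i ^+ N * x = g i * y) &
      (forall y, g i * y = 0 -> exists N : nat, f i ^+ N * y = 0)].

(* A is derived f-complete iff RHom(A_f, A) = 0, i.e. the map
   (y_n) |-> (y_n - f y_(n+1)) on A^N is bijective. *)
Definition derived_complete_elt (f : A) : Prop :=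
  forall x : nat -> A, exists y : nat -> A,
    (forall n, y n - f * y n.+1 = x n) /\
    (forall y' : nat -> A, (forall n, y' n - f * y' n.+1 = x n) -> forall n, y' n = y n).

Definition derived_complete (J : A -> Prop) : Prop :=
  forall f, J f -> derived_complete_elt f.

Definition is_prism (I : A -> Prop) : Prop :=
  [/\ is_delta_structure,
      cartier_divisor I,
      derived_complete (gen_ideal (fun z => z = p%:R \/ I z)) &
      ideal_add I (frobn_ext 1 I) p%:R].

End Prism.

From mathcomp Require Import all_boot all_algebra.
From mathcomp Require Import ring zify.
Set Implicit Arguments. Unset Strict Implicit. Unset Printing Implicit Defensive.
Import GRing.Theory.
Local Open Scope ring_scope.

(* Write K_j := phi^j(I_(m+n-j))A for j <= m, so K_0 = I_(m+n) and K_m = phi^m(I_n)A.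
   Since I_(s+1) = I phi(I_s)A is contained in phi(I_s)A, the K_j increase with j,
   and the heart of the argument is that delta maps K_j into K_(j+1): on a generator
   phi^j(u v) with u in I_s and v in phi^(s+1)(I)A,
     delta(phi^j(u) phi^j(v)) = phi^(j+1)(u) delta(phi^j v) + phi^j(v)^p delta(phi^j u),
   where the last term is handled by induction on s.  The set of z with z and
   delta z in an ideal is itself an ideal, so generators suffice.  Finally the
   recursive formula for delta_(k+1) only involves delta_l and delta(delta_l)
   for l <= k, so x = y mod K_0 propagates to delta_k x = delta_k y mod K_k. *)

Section Ideals.
Variables (A : comPzRingType) (J : A -> Prop).
Hypothesis idJ : is_ideal J.

Lemma ideal0 : J 0. Proof. by case: idJ. Qed.

Lemma idealD x y : J x -> J y -> J (x + y). Proof. by case: idJ => _ + _; apply. Qed.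

Lemma idealMl a x : J x -> J (a * x). Proof. by case: idJ => _ _; apply. Qed.

Lemma idealMr a x : J x -> J (x * a). Proof. by rewrite mulrC; apply: idealMl. Qed.

Lemma idealB x y : J x -> J y -> J (x - y).
Proof. by move=> Jx Jy; rewrite -mulN1r; apply/idealD/idealMl. Qed.

Lemma idealX x e : (0 < e)%N -> J x -> J (x ^+ e).
Proof. by case: e => // e _ Jx; rewrite exprS; apply: idealMr. Qed.

Lemma ideal_sum (T : eqType) (r : seq T) (F : T -> A) :
  (forall i, i \in r -> J (F i)) -> J (\sum_(i <- r) F i).
Proof.
by move=> JF; rewrite big_seq; apply: (big_ind J) => //; [apply: ideal0 | apply: idealD].
Qed.

Lemma idealXB a b e : J (a - b) -> J (a ^+ e - b ^+ e).
Proof. by move=> Jab; rewrite subrXX; apply: idealMr. Qed.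

Lemma idealMB a a' b b' : J (a - a') -> J (b - b') -> J (a * b - a' * b').
Proof.
move=> Ja Jb; rewrite (_ : a * b - a' * b' = (a - a') * b + a' * (b - b')); last by ring.
by apply: idealD; [apply: idealMr | apply: idealMl].
Qed.

Lemma colon_ideal d : is_ideal (fun c => J (c * d)).
Proof.
split=> [|x y Jx Jy|a x Jx]; first by rewrite mul0r; apply: ideal0.
  by rewrite mulrDl; apply: idealD.
by rewrite -mulrA; apply: idealMl.
Qed.

Lemma preim_ideal (f : A -> A) : f 0 = 0 -> {morph f : x y / x + y} ->
  {morph f : x y / x * y} -> is_ideal (fun x => J (f x)).
Proof.
move=> f0 fD fM; split=> [|x y Jx Jy|a x Jx]; first by rewrite f0; apply: ideal0.
  by rewrite fD; apply: idealD.
by rewrite fM; apply: idealMl.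
Qed.

End Ideals.

Section GeneratedIdeal.
Variables (A : comPzRingType) (S : A -> Prop).

Lemma gen_ideal_is_ideal : is_ideal (gen_ideal S).
Proof.
split=> [J [] //|x y Sx Sy J idJ SJ|a x Sx J idJ SJ].
  by apply: (idealD idJ); [apply: Sx | apply: Sy].
by apply: (idealMl idJ); apply: Sx.
Qed.

Lemma mem_gen_ideal s : S s -> gen_ideal S s.
Proof. by move=> Ss J _; apply. Qed.

Lemma gen_ideal_min (J : A -> Prop) : is_ideal J -> (forall s, S s -> J s) ->
  forall z, gen_ideal S z -> J z.
Proof. by move=> idJ SJ z; apply. Qed.

End GeneratedIdeal.

Section DeltaRing.
Variables (p : nat) (A : comPzRingType) (delta : A -> A).
Hypotheses (p_prime : prime p) (delta_str : is_delta_structure p delta).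

Local Notation phi := (frob p delta).
Local Notation phin := (frobn p delta).

Let p_gt0 : (0 < p)%N. Proof. exact: prime_gt0. Qed.

Lemma exprDp_binomial (x y : A) : (x + y) ^+ p = x ^+ p + y ^+ p +
  p%:R * \sum_(1 <= i < p) ('C(p, i) %/ p)%:R * x ^+ i * y ^+ (p - i).
Proof.
have p_gt1 : (1 < p)%N by exact: prime_gt1.
rewrite addrC exprDn -(big_mkord xpredT (fun i => y ^+ (p - i) * x ^+ i *+ 'C(p, i))).
rewrite big_ltn // big_nat_recr /=; last exact: ltnW.
rewrite subn0 subnn bin0 binn !expr0 !mulr1 mul1r !mulr1n mulr_sumr.
rewrite (eq_big_nat _ _ (F2 := fun i => p%:R * (('C(p, i) %/ p)%:R * x ^+ i * y ^+ (p - i))));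
  first by ring.
move=> i /andP [i_gt0 i_ltp].
rewrite -mulr_natl !mulrA -natrM mulnC divnK; first by ring.
by apply: prime_dvd_bin => //; rewrite i_gt0 i_ltp.
Qed.

Lemma delta0 : delta 0 = 0. Proof. by case: delta_str. Qed.

Lemma deltaM x y :
  delta (x * y) = x ^+ p * delta y + y ^+ p * delta x + p%:R * delta x * delta y.
Proof. by case: delta_str => _ _ + _; apply. Qed.

Lemma deltaD x y : delta (x + y) = delta x + delta y
  - \sum_(1 <= i < p) ('C(p, i) %/ p)%:R * x ^+ i * y ^+ (p - i).
Proof. by case: delta_str => _ _ _; apply. Qed.

Lemma deltaM_frob x y : delta (x * y) = phi x * delta y + y ^+ p * delta x.
Proof. by rewrite deltaM /frob; ring. Qed.

Lemma frob0 : phi 0 = 0.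
Proof. by rewrite /frob delta0 mulr0 addr0 expr0n eqn0Ngt p_gt0. Qed.

Lemma frobD : {morph phi : x y / x + y}.
Proof. by move=> x y; rewrite /frob deltaD exprDp_binomial; ring. Qed.

Lemma frobM : {morph phi : x y / x * y}.
Proof. by move=> x y; rewrite /frob deltaM exprMn; ring. Qed.

Lemma frobn_add a b x : phin (a + b) x = phin a (phin b x).
Proof. exact: iterD. Qed.

Lemma frobn0 k : phin k 0 = 0.
Proof. by elim: k => //= k ->; apply: frob0. Qed.

Lemma frobnD k : {morph phin k : x y / x + y}.
Proof. by elim: k => // k IHk x y; rewrite /= IHk frobD. Qed.

Lemma frobnM k : {morph phin k : x y / x * y}.
Proof. by elim: k => // k IHk x y; rewrite /= IHk frobM. Qed.

Lemma frobn_preim_ideal k (K : A -> Prop) : is_ideal K -> is_ideal (fun x => K (phin k x)).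
Proof. by move=> idK; exact: (preim_ideal idK (frobn0 k) (frobnD k) (frobnM k)). Qed.

Lemma delta_closed_ideal (K : A -> Prop) :
  is_ideal K -> is_ideal (fun z => K z /\ K (delta z)).
Proof.
move=> idK; have cross_term x y : K x -> K (\sum_(1 <= i < p)
    ('C(p, i) %/ p)%:R * x ^+ i * y ^+ (p - i)).
  move=> Kx; apply: ideal_sum => // i; rewrite mem_index_iota => /andP [i_gt0 _].
  by apply: (idealMr idK); apply: (idealMl idK); apply: idealX.
split=> [|x y [Kx Kdx] [Ky Kdy]|a x [Kx Kdx]].
- by rewrite delta0; split; apply: ideal0.
- split; first exact: idealD.
  by rewrite deltaD; apply: idealB => //; [apply: idealD | apply: cross_term].
- split; first exact: idealMl.
  rewrite deltaM_frob; apply: idealD => //; first exact: idealMl.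
  by apply: (idealMr idK); apply: idealX.
Qed.

(* delta is not additive, but its defect delta(u + v) - delta u - delta v is divisible
   by both u and v. *)
Lemma delta_cong (K K' : A -> Prop) x y : is_ideal K' ->
  (forall z, K z -> K' z) -> (forall z, K z -> K' (delta z)) ->
  K (x - y) -> K' (delta x - delta y).
Proof.
move=> idK' KK' dKK' Kxy; rewrite -[x](subrK y) (addrC _ y) deltaD.
rewrite (_ : forall u v w : A, u + v - w - u = v - w); last by move=> *; ring.
apply: idealB => //; first exact: dKK'.
apply: ideal_sum => // i; rewrite mem_index_iota => /andP [_ i_ltp].
by apply: (idealMl idK'); apply: idealX => //; [rewrite subn_gt0 | apply: KK'].
Qed.

Section FrobeniusTwists.
Variable I : A -> Prop.

Local Notation phiA := (frobn_ext p delta).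
Local Notation In := (I_n p delta I).

Lemma frobn_ext_is_ideal k J : is_ideal (phiA k J).
Proof. exact: gen_ideal_is_ideal. Qed.

Lemma mem_frobn_ext k (J : A -> Prop) x : J x -> phiA k J (phin k x).
Proof. by move=> Jx; apply: mem_gen_ideal; exists x. Qed.

Lemma frobn_ext_frobn a b (J : A -> Prop) z : phiA a J z -> phiA (b + a) J (phin b z).
Proof.
move: z; apply: (gen_ideal_min (J := fun z => phiA (b + a) J (phin b z))).
  exact/frobn_preim_ideal/frobn_ext_is_ideal.
by move=> _ [w [Jw ->]]; rewrite -frobn_add; apply: mem_frobn_ext.
Qed.

Lemma frobn_ext_I_nS_mul a s c d :
  phiA a (In s) c -> phiA (a + s.+1) I d -> phiA a (In s.+1) (c * d).
Proof.
move=> Hc Hd; move: c Hc; apply: gen_ideal_min.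
  exact/colon_ideal/frobn_ext_is_ideal.
move=> _ [w [Jw ->]]; rewrite mulrC; move: d Hd; apply: gen_ideal_min.
  exact/colon_ideal/frobn_ext_is_ideal.
move=> _ [b [Ib ->]]; rewrite frobn_add -frobnM mulrC; apply: mem_frobn_ext.
by apply: mem_gen_ideal; exists w, (phin s.+1 b); split=> //; apply: mem_frobn_ext.
Qed.

Lemma I_nS_sub_frobn_ext s z : In s.+1 z -> phiA 1 (In s) z.
Proof.
elim: s z => [|s IHs] z Iz; apply: (gen_ideal_min (frobn_ext_is_ideal 1 _) _ Iz).
  by move=> _ [u [v [_ Iv ->]]]; apply: (idealMl (frobn_ext_is_ideal _ _)).
move=> _ [u [v [Iu Iv ->]]]; apply: frobn_ext_I_nS_mul; first exact: IHs.
by rewrite add1n.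
Qed.

Lemma frobn_ext_I_nS_sub j s z : phiA j (In s.+1) z -> phiA j.+1 (In s) z.
Proof.
move: z; apply: (gen_ideal_min (frobn_ext_is_ideal j.+1 (In s))).
by move=> _ [x [Ix ->]]; rewrite -addn1; apply: frobn_ext_frobn; apply: I_nS_sub_frobn_ext.
Qed.

Lemma delta_frobn_ext_gen j (S K : A -> Prop) : is_ideal K ->
  (forall s, S s -> K (phin j s) /\ K (delta (phin j s))) ->
  forall z, phiA j (gen_ideal S) z -> K z /\ K (delta z).
Proof.
move=> idK SK; apply: (gen_ideal_min (delta_closed_ideal idK)).
move=> _ [x [Sx ->]]; move: x Sx.
exact: (gen_ideal_min (frobn_preim_ideal j (delta_closed_ideal idK)) SK).
Qed.

Lemma delta_frobn_ext_I_nS_of_cross_term s j :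
  (forall u v, In s u -> phiA s.+1 I v ->
     phiA j.+1 (In s) (phin j v ^+ p * delta (phin j u))) ->
  forall z, phiA j (In s.+1) z -> phiA j.+1 (In s) (delta z).
Proof.
move=> cross_term z Hz; have idK := frobn_ext_is_ideal j.+1 (In s).
apply: (proj2 (delta_frobn_ext_gen idK _ Hz)) => _ [u [v [Iu Iv ->]]]; split.
  by apply: frobn_ext_I_nS_sub; apply: mem_frobn_ext; apply: mem_gen_ideal; exists u, v.
rewrite frobnM deltaM_frob; apply: (idealD idK); last exact: cross_term.
by apply: (idealMr idK); exact: (mem_frobn_ext (k := j.+1) Iu).
Qed.

Lemma delta_frobn_ext_I_nS s j z : phiA j (In s.+1) z -> phiA j.+1 (In s) (delta z).
Proof.
elim: s z => [|s IHs] z; apply: delta_frobn_ext_I_nS_of_cross_term => u v Iu Iv;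
  have := frobn_ext_frobn (b := j) Iv.
  rewrite addn1 => Iv'; apply: (idealMr (frobn_ext_is_ideal j.+1 I)).
  exact: (idealX (frobn_ext_is_ideal j.+1 I) p_gt0 Iv').
rewrite -addSnnS => /(frobn_ext_I_nS_mul (IHs _ (mem_frobn_ext (k := j) Iu))) Hdv.
have -> : phin j v ^+ p = phin j v ^+ p.-1 * phin j v by rewrite -exprSr prednK.
rewrite mulrAC -mulrA.
exact (idealMl (frobn_ext_is_ideal _ _) _ Hdv).
Qed.

End FrobeniusTwists.

Section WittCoordinates.

Local Notation dk := (delta_k p delta).

Lemma size_delta_seq k x : size (delta_seq p delta k x) = k.+1.
Proof. by elim: k => //= k IHk; rewrite size_rcons IHk. Qed.

Lemma nth_delta_seq k x i : (i <= k)%N -> nth 0 (delta_seq p delta k x) i = dk i x.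
Proof.
elim: k => [|k IHk]; first by case: i.
rewrite leq_eqVlt => /orP [/eqP -> // | i_lt].
by rewrite /= nth_rcons size_delta_seq i_lt IHk.
Qed.

Lemma delta_kS k x : dk k.+1 x =
  \sum_(l < k.+1) \sum_(1 <= i < (p ^ (k - l)).+1)
     (wcoef p (k - l) i)%:R * dk l x ^+ (p * (p ^ (k - l) - i)) * delta (dk l x) ^+ i.
Proof.
rewrite {1}/delta_k /= nth_rcons size_delta_seq ltnn eqxx.
by apply: eq_bigr => l _; apply: eq_bigr => i _; rewrite nth_delta_seq // -ltnS.
Qed.

Variables (K : nat -> A -> Prop) (m : nat).
Hypotheses (idK : forall j, is_ideal (K j))
  (K_mono : forall j z, (j < m)%N -> K j z -> K j.+1 z)
  (K_delta : forall j z, (j < m)%N -> K j z -> K j.+1 (delta z)).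

Lemma filtration_le k l z : (k <= l <= m)%N -> K k z -> K l z.
Proof.
elim: l => [|l IHl] /andP [kl lm]; first by case: k kl.
rewrite leq_eqVlt in kl; case/orP: kl => [/eqP <- // | kl] Kz.
by apply: K_mono => //; apply: IHl => //; rewrite -ltnS kl (ltnW lm).
Qed.

Lemma delta_k_cong x y : K 0 (x - y) -> forall k, (k <= m)%N -> K k (dk k x - dk k y).
Proof.
move=> Kxy; elim/ltn_ind => -[// | k] IHk km.
rewrite !delta_kS -sumrB; apply: ideal_sum => // l _.
rewrite -sumrB; apply: ideal_sum => // i _.
have lk : (l <= k)%N by rewrite -ltnS.
have Kl : K l (dk l x - dk l y) by apply: IHk; rewrite ?ltnS // (leq_trans lk) // ltnW.
have K_lk z : K l z -> K k.+1 z by apply: filtration_le; rewrite (leqW lk) km.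
apply: idealMB => //; first apply: idealMB => //.
- by rewrite !subrr; apply: ideal0.
- by apply: (idealXB (idK _)); apply: K_lk.
apply: idealXB => //; apply: (delta_cong (K := K l)) => // z Kz.
apply: (filtration_le (k := l.+1)); first by rewrite ltnS lk km.
by apply: K_delta => //; apply: leq_ltn_trans lk km.
Qed.

End WittCoordinates.
End DeltaRing.

Unset Implicit Arguments.

Theorem lemma4p10 (p : nat) (A : comPzRingType) (delta : A -> A) (I : A -> Prop)
    (m n : nat) :
  prime p -> is_prism p delta I ->
  forall x y : A, I_n p delta I (m + n) (x - y) ->
  forall k : nat, (k <= m)%N ->
    frobn_ext p delta m (I_n p delta I n) (delta_k p delta k x - delta_k p delta k y).
Proof.
move=> p_prime [delta_str _ _ _] x y Ixy k km.
pose K j := frobn_ext p delta j (I_n p delta I (m + n - j)).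
have idK j : is_ideal (K j) := frobn_ext_is_ideal p delta j _.
have K_succ j : (j < m)%N -> (m + n - j = (m + n - j.+1).+1)%N by lia.
have K_mono j z : (j < m)%N -> K j z -> K j.+1 z.
  by move=> /K_succ; rewrite /K => ->; apply: frobn_ext_I_nS_sub.
have K_delta j z : (j < m)%N -> K j z -> K j.+1 (delta z).
  by move=> /K_succ; rewrite /K => ->; apply: delta_frobn_ext_I_nS.
have Kxy : K 0 (x - y) by rewrite /K subn0; exact (mem_frobn_ext (k := 0) Ixy).
have := filtration_le K_mono (l := m) _ (delta_k_cong delta_str idK K_mono K_delta Kxy km).
by rewrite /K addKn km leqnn; apply.
Qed.
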